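(* For $0\le r<n$, the Laplacian $\Lambda_r$ on $M_r$ is positive definite. (Consequently $H_r(M)=0$ for $0\le r<n$.)
   Context: $M_r$ ($0\le r\le n$) is the complex vector space with orthonormal basis the injective words of length $r$ on $\{1,\dots,n\}$, with boundary $\partial_r(a_1\cdots a_r)=\sum_{j=1}^r(-1)^{j-1}a_1\cdots\widehat{a_j}\cdots a_r$. $\delta_r$ is the adjoint of $\partial_{r+1}$ with respect to these orthonormal bases, and $\Lambda_r=\delta_{r-1}\partial_r+\partial_{r+1}\delta_r$. $H_r(M)$ is the $r$-th homology of $(M_*,\partial_* )$. *)

From HB Require Import structures.
From mathcomp Require Import all_boot all_order all_algebra all_field.
Set Implicit Arguments. Unset Strict Implicit. Unset Printing Implicit Defensive.
Import Order.TTheory GRing.Theory Num.Theory.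
Local Open Scope ring_scope.

Definition word (n r : nat) := {t : r.-tuple 'I_n | uniq t}.

(* Vectors of M_r: coordinates in the orthonormal basis of words. *)
Definition vecM (n r : nat) := word n r -> algC.

Definition dotM (T : finType) (f g : T -> algC) : algC :=
  \sum_(x : T) f x * (g x)^*.

(* Coefficient of the word x in d_r(u): sum_j (-1)^(j-1) [u with j-th letter
   deleted = x] (0-indexed here, so sign (-1)^j). For r = 0 the sum is empty,
   i.e. d_0 = 0 (M_{-1} = 0). *)
Definition bd_coef (n r : nat) (u : word n r) (x : word n r.-1) : algC :=
  \sum_(j < r) (if take j (val (val u)) ++ drop j.+1 (val (val u))
                   == val (val x) then (-1) ^+ j else 0).

Definition bdry (n r : nat) (f : vecM n r) : vecM n r.-1 :=
  fun x => \sum_(u : word n r) bd_coef u x * f u.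

(* delta_r : M_r -> M_{r+1}, the adjoint (conjugate transpose) of d_{r+1} *)
Definition cobdry (n r : nat) (g : vecM n r) : vecM n r.+1 :=
  fun w => \sum_(x : word n r) (bd_coef w x)^* * g x.

(* Laplacian Lambda_r = delta_{r-1} d_r + d_{r+1} delta_r
   (for r = 0 the first term is absent since M_{-1} = 0). *)
Definition lap (n r : nat) : vecM n r -> vecM n r :=
  match r as r0 return vecM n r0 -> vecM n r0 with
  | 0 => fun f => bdry (cobdry f)
  | r'.+1 => fun f x => cobdry (bdry f) x + bdry (cobdry f) x
  end.

Definition posdef (T : finType) (A : (T -> algC) -> (T -> algC)) : Prop :=
  (forall f g : T -> algC, dotM (A f) g = dotM f (A g)) /\
  (forall f : T -> algC, (exists x, f x != 0) -> 0 < dotM (A f) f).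

From mathcomp Require Import all_boot all_order all_algebra all_field.
Import Order.TTheory GRing.Theory Num.Theory.
Local Open Scope ring_scope.

(* Exactness comes from a contracting homotopy built one letter at a time:
   prepending a letter b is a cone operator satisfying d (b.x) = x - b.(d x)
   for words x avoiding b, so subtracting d (b.h) from a cycle h kills every
   coordinate on words avoiding b, while the remainder stays supported on
   words containing the letters already treated.  After all n letters the
   remainder lives on words containing every letter, and there are none of
   length r < n.  Positivity then follows from
   <Lambda f, f> = |d f|^2 + |delta f|^2: if both vanish, f = d g is a
   boundary and |f|^2 = <g, delta f> = 0. *)

Set Implicit Arguments. Unset Strict Implicit. Unset Printing Implicit Defensive.

Local Notation wseq u := (val (val u)).

Definition del_at (T : Type) (j : nat) (s : seq T) := take j s ++ drop j.+1 s.

Lemma uniq_del_at (T : eqType) j (s : seq T) : uniq s -> uniq (del_at j s).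
Proof.
move=> Hs; apply: subseq_uniq Hs.
rewrite -{2}(cat_take_drop j s) /del_at; apply: cat_subseq => //.
by rewrite -add1n -drop_drop drop_subseq.
Qed.

Lemma size_del_at (T : Type) j (s : seq T) :
  (j < size s)%N -> size (del_at j s) = (size s).-1.
Proof.
move=> Hj; rewrite /del_at size_cat size_take size_drop Hj.
by case: (size s) Hj => // m Hj; rewrite subSS subnKC // -ltnS.
Qed.

Lemma del_at_notin (T : eqType) j (s : seq T) (a b : T) :
  a \in s -> b \in s -> a \notin del_at j s -> b \notin del_at j s -> a = b.
Proof.
move=> Ha Hb Na Nb.
have Hj : (j < size s)%N.
  rewrite ltnNge; apply: contra Na => Hj.
  by rewrite /del_at take_oversize ?drop_oversize ?cats0 // (leq_trans Hj).
have nth_j c : c \in s -> c \notin del_at j s -> c = nth a s j.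
  rewrite -{1}(cat_take_drop j s) /del_at !mem_cat negb_or => Hc /andP [Ht Hd].
  move: Hc; rewrite (negbTE Ht) (drop_nth a Hj) in_cons (negbTE Hd) orbF.
  by move/eqP.
by rewrite (nth_j a) // (nth_j b).
Qed.

Definition bcoef n (s t : seq 'I_n) : algC :=
  \sum_(0 <= j < size s) (if del_at j s == t then (-1) ^+ j else 0).

Lemma bd_coefE n r (u : word n r) (x : word n r.-1) :
  bd_coef u x = bcoef (wseq u) (wseq x).
Proof. by rewrite /bd_coef /bcoef size_tuple big_mkord. Qed.

Lemma bcoef_neq0 n (s t : seq 'I_n) :
  bcoef s t != 0 -> exists j, del_at j s = t.
Proof.
move=> Hst; suff /hasP [j _ /eqP <-] :
    has (fun j => del_at j s == t) (index_iota 0 (size s)) by exists j.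
apply: contraNT Hst => /hasPn Hno; apply/eqP/big1_seq => j /andP [_ /Hno].
by move/negbTE ->.
Qed.

Lemma bcoef_cons n (b : 'I_n) s t :
  bcoef (b :: s) t =
    (s == t)%:R - (if t is c :: t' then (b == c)%:R * bcoef s t' else 0).
Proof.
rewrite /bcoef /= big_nat_recl // expr0 /del_at /= drop0.
congr (_ + _); first by case: eqP.
case: t => [|c t']; first by rewrite oppr0; apply: big1_seq.
rewrite mulr_sumr -sumrN.
apply: eq_bigr => j _; rewrite eqseq_cons exprS mulN1r.
by case: (b == c); case: (_ == t'); rewrite ?mul1r ?mul0r ?oppr0.
Qed.

Lemma alt_sum_bcoef_del_at n (w x : seq 'I_n) :
  \sum_(0 <= j < size w) (-1) ^+ j * bcoef (del_at j w) x = 0.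
Proof.
elim: w x => [|b s IH] x; first by rewrite big_geq.
rewrite /= big_nat_recl // expr0 mul1r.
have -> : del_at 0 (b :: s) = s by rewrite /del_at /= drop0.
have Ej j : (-1) ^+ j.+1 * bcoef (del_at j.+1 (b :: s)) x =
    - (if del_at j s == x then (-1) ^+ j else 0) +
    (if x is c :: x' then (b == c)%:R * ((-1) ^+ j * bcoef (del_at j s) x')
     else 0).
  change (del_at j.+1 (b :: s)) with (b :: del_at j s).
  rewrite bcoef_cons exprS mulN1r mulNr mulrBr opprB addrC.
  congr (_ + _); first by case: (_ == x); rewrite ?mulr1 ?mulr0 ?oppr0.
  by case: x => [|c x']; rewrite ?mulr0 // mulrCA.
under eq_bigr do rewrite Ej.
rewrite big_split /= sumrN addrA -/(bcoef s x) addrN add0r.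
case: x {Ej} => [|c x']; first by rewrite big1.
by rewrite -mulr_sumr IH mulr0.
Qed.

Lemma sum_neq0 (R : nmodType) (I : finType) (F : I -> R) :
  \sum_i F i != 0 -> exists i, F i != 0.
Proof.
move=> HF; apply/existsP; apply: contraNT HF => /existsPn HF.
by apply/eqP/big1 => i _; apply/eqP/negbNE/HF.
Qed.

Lemma word_of_seq n r (t : seq 'I_n) :
  uniq t -> size t = r -> exists w : word n r, wseq w = t.
Proof.
move=> Ht /eqP Hs.
by exists (exist (fun t : r.-tuple 'I_n => uniq t) (Tuple Hs) Ht).
Qed.

Lemma sum_word_seq n r (t : seq 'I_n) (F : word n r -> algC) (G : algC) :
  (forall u : word n r, wseq u = t -> F u = G) ->
  \sum_(u : word n r) (if wseq u == t then F u else 0) =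
  if uniq t && (size t == r) then G else 0.
Proof.
move=> HF; case: ifP => [/andP [Ht /eqP Hs] | Hn].
  have [w Hw] := word_of_seq Ht Hs.
  rewrite (bigD1 w) //= Hw eqxx HF // big1 ?addr0 // => u Hne.
  case: eqP => // Hut; case/eqP: Hne; apply/val_inj/val_inj.
  by rewrite /= Hut Hw.
apply: big1 => u _; case: eqP => // Hut.
by move: Hn; rewrite -Hut (valP u) size_tuple eqxx.
Qed.

Lemma sum_word_eq n r (F : word n r -> algC) (w : word n r) :
  \sum_(u : word n r) (if wseq u == wseq w then F u else 0) = F w.
Proof.
rewrite (sum_word_seq (G := F w)); first by rewrite (valP w) size_tuple eqxx.
by move=> u Hu; congr F; apply/val_inj/val_inj.
Qed.

Lemma bdry_bdry n r (g : vecM n r.+1) (z : word n r.-1) :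
  bdry (bdry g : vecM n r) z = 0.
Proof.
rewrite /bdry; under eq_bigr do rewrite mulr_sumr.
rewrite exchange_big /=; apply: big1 => w _.
suff sum_bcoef2 :
    \sum_(u : word n r) bcoef (wseq w) (wseq u) * bcoef (wseq u) (wseq z) = 0.
  rewrite -[RHS](mul0r (g w)) -[in RHS]sum_bcoef2 mulr_suml.
  by apply: eq_bigr => u _; rewrite !bd_coefE mulrCA mulrA mulrC.
apply: etrans (alt_sum_bcoef_del_at (wseq w) (wseq z)).
under eq_bigr => u _ do rewrite /bcoef mulr_suml.
rewrite exchange_big /=; apply: eq_big_nat => j /andP [_ Hj].
transitivity (\sum_(u : word n r) (if wseq u == del_at j (wseq w)
   then (-1) ^+ j * bcoef (wseq u) (wseq z) else 0)).
  by apply: eq_bigr => u _; rewrite eq_sym; case: ifP; rewrite ?mul0r.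
rewrite (sum_word_seq (G := (-1) ^+ j * bcoef (del_at j (wseq w)) (wseq z))).
  by rewrite uniq_del_at ?(valP w) //= size_del_at // size_tuple eqxx.
by move=> u ->.
Qed.

Lemma bdryD n r (F G : vecM n r) (z : word n r.-1) :
  bdry (fun y => F y + G y) z = bdry F z + bdry G z.
Proof. by rewrite /bdry -big_split; apply: eq_bigr => u _; rewrite mulrDr. Qed.

Lemma bdryB n r (F G : vecM n r) (z : word n r.-1) :
  bdry (fun y => F y - G y) z = bdry F z - bdry G z.
Proof. by rewrite /bdry -sumrB; apply: eq_bigr => u _; rewrite mulrBr. Qed.

Lemma word_behead n r (y : word n r) c (t : seq 'I_n) :
  wseq y = c :: t -> exists z : word n r.-1, wseq z = t.
Proof.
move=> Hy; have := valP y; rewrite /= Hy /= => /andP [_ Ht].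
by apply: word_of_seq Ht _; rewrite -(size_tuple (val y)) Hy.
Qed.

(* [cone b] prepends the letter [b]; it vanishes unless [m = r.+1].  Leaving
   [m] free lets [bdry_cone] be stated in every degree, including [r = 0]
   where [r.-1.+1] is not [r]. *)
Definition cone n m r (b : 'I_n) (f : vecM n r) : vecM n m :=
  fun u => \sum_(x : word n r) (if wseq u == b :: wseq x then f x else 0).
Arguments cone {n m r}.

Definition avoid n r (b : 'I_n) (f : vecM n r) : vecM n r :=
  fun x => if b \in wseq x then 0 else f x.

Lemma cone_neq0 n m r b (f : vecM n r) (y : word n m) :
  cone b f y != 0 -> exists2 z : word n r, wseq y = b :: wseq z & f z != 0.
Proof.
by move/sum_neq0 => [z]; case: ifP => [/eqP Hyz Hz|_]; [exists z | rewrite eqxx].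
Qed.

Lemma cone_cons n m r b (f : vecM n r) (y : word n m) c (z : word n r) :
  wseq y = c :: wseq z -> cone b f y = (b == c)%:R * f z.
Proof.
move=> Hy; rewrite /cone Hy; under eq_bigr do rewrite eqseq_cons (eq_sym c).
case: eqP => _; last by rewrite mul0r big1.
by under eq_bigr do rewrite eq_sym; rewrite sum_word_eq mul1r.
Qed.

Lemma bdry_cone n r b (f : vecM n r) (y : word n r) :
  bdry (cone b f : vecM n r.+1) y = avoid b f y - cone b (bdry (avoid b f)) y.
Proof.
transitivity (\sum_(x : word n r) bcoef (b :: wseq x) (wseq y) * avoid b f x).
  rewrite /bdry /cone; under eq_bigr do rewrite mulr_sumr.
  rewrite exchange_big /=; apply: eq_bigr => x _.
  transitivity (\sum_(u : word n r.+1) (if wseq u == b :: wseq x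
     then bcoef (b :: wseq x) (wseq y) * f x else 0)).
    by apply: eq_bigr => u _; case: eqP => [Hu|_]; rewrite ?mulr0 // bd_coefE -Hu.
  rewrite (sum_word_seq (G := bcoef (b :: wseq x) (wseq y) * f x)) //.
  rewrite /avoid /= (valP x) size_tuple eqxx !andbT.
  by case: (b \in _); rewrite ?mulr0.
under eq_bigr do rewrite bcoef_cons mulrBl mulr_natl mulrb.
rewrite sumrB sum_word_eq; congr (_ - _).
case Ey: (wseq y) => [|c t].
  rewrite big1 => [|x _]; last by rewrite mul0r.
  by apply/esym/big1 => z _; rewrite Ey.
have [z Hz] := word_behead Ey.
have Eyz : wseq y = c :: wseq z by rewrite Ey Hz.
rewrite (cone_cons _ _ Eyz) /bdry mulr_sumr; apply: eq_bigr => x _.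
by rewrite bd_coefE Hz mulrA.
Qed.

Definition supp_contains n r (L : seq 'I_n) (h : vecM n r) :=
  forall y : word n r, h y != 0 -> {subset L <= wseq y}.

Lemma bdry_avoid_supp n r (L : seq 'I_n) b (h : vecM n r) (z : word n r.-1) :
  (forall x, bdry h x = 0) -> supp_contains L h -> b \notin wseq z ->
  bdry (avoid b h) z != 0 -> {subset L <= b :: wseq z}.
Proof.
move=> Hcyc HL Hbz.
have -> : bdry (avoid b h) z =
    - \sum_(x : word n r) (if b \in wseq x then bd_coef x z * h x else 0).
  rewrite -[LHS]subr0 -[X in _ - X](Hcyc z) /bdry -sumrB -sumrN.
  apply: eq_bigr => x _; rewrite /avoid.
  by case: ifP => _; rewrite ?mulr0 ?sub0r ?subrr ?oppr0.
rewrite oppr_eq0 => /sum_neq0 [x]; case: ifP => [Hbx|_]; last by rewrite eqxx.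
rewrite mulf_eq0 negb_or bd_coefE => /andP [/bcoef_neq0 [j Hj] /HL HLx] s Hs.
rewrite in_cons; case Hsz: (s \in wseq z); first by rewrite orbT.
rewrite orbF; apply/eqP; apply: (del_at_notin (j := j) (HLx s Hs) Hbx).
  by rewrite Hj Hsz.
by rewrite Hj.
Qed.

Lemma supp_contains_cone n r (L : seq 'I_n) b (h : vecM n r) :
  (forall x, bdry h x = 0) -> supp_contains L h ->
  supp_contains (b :: L) (fun y => h y - bdry (cone b h : vecM n r.+1) y).
Proof.
move=> Hcyc HL y; rewrite bdry_cone opprB addrCA addrC [avoid b h y]/avoid.
case Hby: (b \in wseq y); last first.
  by rewrite subrr add0r => /cone_neq0 [z Hyz _]; rewrite Hyz mem_head in Hby.
rewrite subr0 => Hy s; rewrite in_cons => /predU1P [-> // | Hs].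
have [h0|/HL] := eqVneq (h y) 0; last exact.
move: Hy; rewrite h0 add0r => /cone_neq0 [z Hyz Hz].
have Hbz : b \notin wseq z.
  by have : uniq (wseq y) := valP y; rewrite Hyz cons_uniq => /andP [].
by rewrite Hyz; apply: bdry_avoid_supp Hcyc HL Hbz Hz s Hs.
Qed.

Lemma cycle_supp_contains n r (f : vecM n r) :
  (forall x, bdry f x = 0) ->
  forall L, exists g : vecM n r.+1, supp_contains L (fun y => f y - bdry g y).
Proof.
move=> Hf; elim=> [|b L [g Hg]]; first by exists (fun _ => 0) => y _ s.
pose h : vecM n r := fun y => f y - bdry g y.
have Hh x : bdry h x = 0 by rewrite /h bdryB Hf bdry_bdry subr0.
exists (fun w => g w + cone b h w) => y.
by rewrite bdryD opprD addrA; apply: supp_contains_cone Hh Hg y.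
Qed.

Lemma cycle_is_boundary n r (hr : (r < n)%N) (f : vecM n r) :
  (forall x, bdry f x = 0) -> exists g : vecM n r.+1, forall x, bdry g x = f x.
Proof.
move=> Hf; have [g Hg] := cycle_supp_contains Hf (enum 'I_n).
exists g => x; apply/eqP; rewrite eq_sym -subr_eq0.
apply: contraTT hr => /Hg Hsub.
rewrite -leqNgt -{1}(size_enum_ord n).
by rewrite (leq_trans (uniq_leq_size (enum_uniq _) Hsub)) ?size_tuple.
Qed.

Lemma dotMC (T : finType) (f g : T -> algC) : dotM f g = (dotM g f)^*.
Proof.
rewrite /dotM rmorph_sum; apply: eq_bigr => x _.
by rewrite rmorphM /= conjCK mulrC.
Qed.

Lemma dotMDl (T : finType) (f f' g : T -> algC) :
  dotM (fun x => f x + f' x) g = dotM f g + dotM f' g.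
Proof. by rewrite /dotM -big_split; apply: eq_bigr => x _; rewrite mulrDl. Qed.

Lemma dotM_ge0 (T : finType) (f : T -> algC) : 0 <= dotM f f.
Proof. by apply: sumr_ge0 => x _; apply: mul_conjC_ge0. Qed.

Lemma dotM_eq0 (T : finType) (f : T -> algC) : dotM f f = 0 -> forall x, f x = 0.
Proof.
move=> Hf x.
have /eqP := psumr_eq0P (fun i _ => mul_conjC_ge0 (f i)) Hf (i := x) isT.
by rewrite mul_conjC_eq0 => /eqP.
Qed.

Lemma bdry_adj n r (F : vecM n r.+1) (g : vecM n r) :
  dotM (bdry F) g = dotM F (cobdry g).
Proof.
rewrite /dotM /bdry /cobdry; under eq_bigr do rewrite mulr_suml.
rewrite exchange_big; apply: eq_bigr => u _.
rewrite rmorph_sum mulr_sumr; apply: eq_bigr => x _.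
by rewrite rmorphM /= conjCK mulrCA mulrA.
Qed.

Lemma cobdry_adj n r (F : vecM n r.+1) (g : vecM n r) :
  dotM (cobdry g) F = dotM g (bdry F).
Proof. by rewrite dotMC -bdry_adj -dotMC. Qed.

Lemma dotM_lap n r (f g : vecM n r) :
  dotM (lap f) g = dotM (bdry f) (bdry g) + dotM (cobdry f) (cobdry g).
Proof.
case: r f g => [|r] f g /=; last by rewrite dotMDl bdry_adj cobdry_adj.
rewrite bdry_adj [dotM (bdry f) _]big1 ?add0r // => x _.
by rewrite [bdry f x]big1 ?mul0r // => u _; rewrite /bd_coef big_ord0 mul0r.
Qed.

Lemma lap_hermitian n r (f g : vecM n r) : dotM (lap f) g = dotM f (lap g).
Proof. by rewrite dotM_lap [RHS]dotMC dotM_lap rmorphD /= -!dotMC. Qed.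

Lemma lap_pos n r (hr : (r < n)%N) (f : vecM n r) :
  (exists x, f x != 0) -> 0 < dotM (lap f) f.
Proof.
move=> [x Hx]; rewrite dotM_lap lt_def addr_ge0 ?dotM_ge0 // andbT.
apply: contra Hx; rewrite paddr_eq0 ?dotM_ge0 // => /andP [/eqP Hd /eqP Hdelta].
have [g Hg] := cycle_is_boundary hr (dotM_eq0 Hd).
suff /dotM_eq0 -> : dotM f f = 0 by [].
transitivity (dotM (bdry g) f); first by apply: eq_bigr => y _; rewrite Hg.
by rewrite bdry_adj; apply: big1 => w _; rewrite (dotM_eq0 Hdelta) conjC0 mulr0.
Qed.

Unset Implicit Arguments.

Theorem theorem3p3 (n r : nat) (hr : (r < n)%N) :
  posdef (@lap n r) /\
  (* H_r(M) = 0 : every r-cycle is an (r+1)-boundary *)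
  (forall f : vecM n r, (forall x, bdry f x = 0) ->
     exists g : vecM n r.+1, forall x, bdry g x = f x).
Proof.
split; last exact: cycle_is_boundary.
by split; [exact: lap_hermitian | exact: lap_pos].
Qed.
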